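(* In the real projective plane, let $\Gamma$ be the degenerate conic given by a pair of distinct lines $g_1,g_2$, and let $\mathcal{C}^*$ be the degenerate dual conic given by a pair of distinct points $C_1,C_2$. Consider polygonal lines inscribed in $\Gamma$ and circumscribed about $\mathcal{C}^*$. Such a polygonal line is periodic with period $n$ if and only if $n=4$ and the lines $g_1$ and $g_2$ intersect the line $C_1C_2$ in a pair of points which is harmonically conjugate to the pair $C_1,C_2$.
   Context: $\mathcal{C}^*$ is the union of the pencils of lines through $C_1$ and through $C_2$. A polygonal line $A_1A_2\dots$ is inscribed in $\Gamma$ and circumscribed about $\mathcal{C}^*$ if its vertices lie alternately on $g_1$ and $g_2$ and its side lines $A_iA_{i+1}$ pass alternately through $C_1$ and $C_2$; it is periodic with period $n$ if $A_{i+n}=A_i$ for all $i$. Points $D_1,D_2$ on the line $C_1C_2$ form a pair harmonically conjugate to $C_1,C_2$ if the cross-ratio $(C_1,C_2;D_1,D_2)$ equals $-1$. *)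

(* The real projective plane over a real (ordered) field R:
   points and lines are nonzero row vectors of 'rV[R]_3 (homogeneous
   coordinates), taken up to a nonzero scalar factor. *)
From HB Require Import structures.
From mathcomp Require Import all_boot all_order all_algebra.
Set Implicit Arguments. Unset Strict Implicit. Unset Printing Implicit Defensive.
Import Order.TTheory GRing.Theory Num.Theory.
Local Open Scope ring_scope.

Definition dot (R : realFieldType) (u v : 'rV[R]_3) : R :=
  \sum_(i < 3) u 0 i * v 0 i.

Definition on (R : realFieldType) (p l : 'rV[R]_3) : Prop := dot p l = 0.

Definition same_pt (R : realFieldType) (p q : 'rV[R]_3) : Prop :=
  exists k : R, k != 0 /\ p = k *: q.

Definition collinear (R : realFieldType) (p q r : 'rV[R]_3) : Prop :=
  exists l : 'rV[R]_3, l != 0 /\ on p l /\ on q l /\ on r l.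

(* cross-ratio (a, b; c, d) = r: writing c ~ a + lam b and d ~ a + mu b
   (coordinates on the line ab), the cross-ratio is lam / mu. *)
Definition cross_ratio_is (R : realFieldType) (a b c d : 'rV[R]_3) (r : R) : Prop :=
  exists lam mu : R, mu != 0 /\ same_pt c (a + lam *: b) /\
    same_pt d (a + mu *: b) /\ lam = r * mu.

Definition harmonic (R : realFieldType) (C1 C2 D1 D2 : 'rV[R]_3) : Prop :=
  cross_ratio_is C1 C2 D1 D2 (-1).

(* A polygonal line A_0 A_1 A_2 ... : genuine points, consecutive vertices
   distinct, consecutive sides distinct (A_i, A_{i+1}, A_{i+2} not collinear). *)
Definition polygonal_line (R : realFieldType) (A : nat -> 'rV[R]_3) : Prop :=
  forall i, A i != 0 /\ ~ same_pt (A i) (A i.+1) /\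
            ~ collinear (A i) (A i.+1) (A i.+2).

(* inscribed in Gamma = g1 \cup g2 and circumscribed about C* = pencils at
   C1, C2: vertices alternately on g1, g2, side lines A_i A_{i+1}
   alternately through C1, C2 (either starting choice allowed). *)
Definition inscribed_circumscribed (R : realFieldType) (g1 g2 C1 C2 : 'rV[R]_3)
  (A : nat -> 'rV[R]_3) : Prop :=
  exists b c : bool, forall i,
    on (A i) (if odd (i + b) then g2 else g1) /\
    collinear (A i) (A i.+1) (if odd (i + c) then C2 else C1).

Definition periodic_with_period (R : realFieldType) (A : nat -> 'rV[R]_3) (n : nat) : Prop :=
  (0 < n)%N /\ (forall i, same_pt (A (i + n)%N) (A i)) /\
  (forall m, (0 < m < n)%N -> ~ (forall i, same_pt (A (i + m)%N) (A i))).

From HB Require Import structures.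
From mathcomp Require Import all_boot all_order all_algebra.
From mathcomp Require Import ring lra.
Set Implicit Arguments. Unset Strict Implicit. Unset Printing Implicit Defensive.
Import Order.TTheory GRing.Theory Num.Theory.
Local Open Scope ring_scope.

(* Let g, g', C, C' be g1, g2, C1, C2 in the order in which the polygon uses them.
   Projecting a point x of g from C onto g' and then from C' back onto g is, in
   homogeneous coordinates, the linear map x |-> kappa x + (x.g') E, where
   kappa = (C'.g)(C.g') and E, the point where CC' meets g, is a fixed point with
   eigenvalue rho = (C.g)(C'.g').  So after 2k sides the first vertex A_0 has become
   kappa^k A_0 + h_k (A_0.g') E with h_k = (rho^k - kappa^k) / (rho - kappa).
   As A_0 lies neither on g' nor at E, the polygon closes after 2k sides iff
   h_k = 0, i.e. iff rho = -kappa and k is even; odd periods are impossible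
   because the odd vertices lie on g' and A_0 does not.  Finally rho + kappa = 0
   says exactly that g1 and g2 meet C1C2 in a pair harmonic to C1, C2. *)

Definition i0 : 'I_3 := @Ordinal 3 0 isT.
Definition i1 : 'I_3 := @Ordinal 3 1 isT.
Definition i2 : 'I_3 := @Ordinal 3 2 isT.

Section ProjectivePlane.
Variable R : realFieldType.
Implicit Types (a b g l m p q x y C : 'rV[R]_3) (k r s t : R).

Lemma dotE a b : dot a b = a 0 i0 * b 0 i0 + a 0 i1 * b 0 i1 + a 0 i2 * b 0 i2.
Proof.
rewrite /dot !big_ord_recl big_ord0 addr0 addrA.
have -> : lift ord0 (lift ord0 ord0) = i2 :> 'I_3 by apply/val_inj.
have -> : lift ord0 ord0 = i1 :> 'I_3 by apply/val_inj.
by have -> : ord0 = i0 :> 'I_3 by apply/val_inj.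
Qed.

Lemma row3P a b : a 0 i0 = b 0 i0 -> a 0 i1 = b 0 i1 -> a 0 i2 = b 0 i2 -> a = b.
Proof.
move=> e0 e1 e2; apply/rowP => -[[|[|[|//]]] lt_i3].
- by rewrite (_ : Ordinal lt_i3 = i0) //; apply/val_inj.
- by rewrite (_ : Ordinal lt_i3 = i1) //; apply/val_inj.
- by rewrite (_ : Ordinal lt_i3 = i2) //; apply/val_inj.
Qed.

Definition cross a b : 'rV[R]_3 :=
  \row_(j < 3) [:: a 0 i1 * b 0 i2 - a 0 i2 * b 0 i1;
                   a 0 i2 * b 0 i0 - a 0 i0 * b 0 i2;
                   a 0 i0 * b 0 i1 - a 0 i1 * b 0 i0]`_j.

Ltac coords := rewrite ?dotE /cross ?mxE /=.

Lemma dotC a b : dot a b = dot b a.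
Proof. by coords; ring. Qed.

Lemma dotDl a b c : dot (a + b) c = dot a c + dot b c.
Proof. by coords; ring. Qed.

Lemma dotBl a b c : dot (a - b) c = dot a c - dot b c.
Proof. by coords; ring. Qed.

Lemma dot0l a : dot 0 a = 0.
Proof. by coords; ring. Qed.

Lemma dotZl k a b : dot (k *: a) b = k * dot a b.
Proof. by coords; ring. Qed.

Lemma dotZr k a b : dot a (k *: b) = k * dot a b.
Proof. by coords; ring. Qed.

Lemma dot_crossl a b : dot a (cross a b) = 0.
Proof. by coords; ring. Qed.

Lemma dot_crossr a b : dot b (cross a b) = 0.
Proof. by coords; ring. Qed.

Lemma cross0l a : cross 0 a = 0.
Proof. by apply: row3P; coords; ring. Qed.

Lemma cross_cross a b c : cross (cross a b) c = dot a c *: b - dot b c *: a.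
Proof. by apply: row3P; coords; ring. Qed.

Lemma dot_self_neq0 a : a != 0 -> dot a a != 0.
Proof.
apply: contraNneq; rewrite dotE -!expr2 => aa0.
have := sqr_ge0 (a 0 i0); have := sqr_ge0 (a 0 i1); have := sqr_ge0 (a 0 i2).
have coord_eq0 j : a 0 j ^+ 2 = 0 -> a 0 j = 0 by move/eqP; rewrite sqrf_eq0 => /eqP.
by move=> ? ? ?; apply/eqP/row3P; rewrite mxE; apply: coord_eq0; lra.
Qed.

Lemma cross_eq0 a b : a != 0 -> cross a b = 0 -> b = (dot b a / dot a a) *: a.
Proof.
move=> a0 ab0; have := cross_cross a b a; rewrite ab0 cross0l => /esym/eqP.
rewrite subr_eq0 => /eqP aab; apply: (scalerI (dot_self_neq0 a0)).
by rewrite aab scalerA mulrC divfK ?dot_self_neq0.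
Qed.

Lemma cross_neq0 l m p : l != 0 -> on p l -> ~ on p m -> cross l m != 0.
Proof.
move=> l0 pl pm; apply/eqP => /(cross_eq0 l0) ml; apply: pm.
by rewrite /on ml dotZr pl mulr0.
Qed.

Lemma on_meet l m p : cross l m != 0 -> on p l -> on p m -> exists s, p = s *: cross l m.
Proof.
move=> lm0 pl pm; eexists; apply: (cross_eq0 lm0).
by rewrite cross_cross dotC pl dotC pm !scale0r subr0.
Qed.

Lemma same_pt_refl p : same_pt p p.
Proof. by exists 1; rewrite oner_neq0 scale1r. Qed.

Lemma same_pt_sym p q : same_pt p q -> same_pt q p.
Proof.
move=> [k [k0 ->]]; exists k^-1; split; first by rewrite invr_eq0.
by rewrite scalerA mulVf // scale1r.
Qed.

Lemma same_pt_trans p q q' : same_pt p q -> same_pt q q' -> same_pt p q'.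
Proof.
move=> [k [k0 ->]] [k' [k'0 ->]]; exists (k * k').
by rewrite mulf_neq0 // scalerA.
Qed.

Lemma same_pt_scale k p q : p != 0 -> p = k *: q -> same_pt p q.
Proof.
move=> p0 pq; exists k; split=> //; apply: contraNneq p0 => k0.
by rewrite pq k0 scale0r.
Qed.

Lemma same_ptZ k p : k != 0 -> same_pt (k *: p) p.
Proof. by exists k. Qed.

Lemma same_pt_on p q l : same_pt p q -> on p l -> on q l.
Proof.
move=> [k [k0 ->]]; rewrite /on dotZl => /eqP.
by rewrite mulf_eq0 (negbTE k0) => /eqP.
Qed.

Lemma cross_neq0_not_same a b : a != 0 -> b != 0 -> ~ same_pt a b -> cross a b != 0.
Proof.
move=> a0 b0 ab; apply/eqP => /(cross_eq0 a0) bE.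
by apply/ab/same_pt_sym; apply: same_pt_scale bE.
Qed.

Lemma same_pt_meet l m p q : cross l m != 0 -> p != 0 -> q != 0 ->
  on p l -> on p m -> on q l -> on q m -> same_pt p q.
Proof.
move=> lm0 p0 q0 pl pm ql qm.
have [s pE] := on_meet lm0 pl pm; have [s' qE] := on_meet lm0 ql qm.
have s'0 : s' != 0 by apply: contraNneq q0 => s'0; rewrite qE s'0 scale0r.
by apply: (@same_pt_scale (s / s')); rewrite // pE qE scalerA divfK.
Qed.

(* [central_proj C m x] is the point where the line through [x] and [C] meets [m]. *)
Definition central_proj C m x : 'rV[R]_3 := dot x m *: C - dot C m *: x.

Lemma central_proj_on C m x : on (central_proj C m x) m.
Proof. by rewrite /on dotBl !dotZl mulrC subrr. Qed.

Lemma same_pt_central_proj C m p q :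
  same_pt p q -> same_pt (central_proj C m p) (central_proj C m q).
Proof.
move=> [k [k0 ->]]; exists k; split=> //.
by rewrite /central_proj dotZl scalerBr !scalerA -scalerA [_ * k]mulrC.
Qed.

Lemma central_proj_neq0 C m g x :
  x != 0 -> on x g -> ~ on C g -> ~ on C m -> central_proj C m x != 0.
Proof.
move=> x0 xg Cg Cm; apply/eqP => px0.
have /eqP : dot (central_proj C m x) g = dot x m * dot C g.
  by rewrite /central_proj dotBl !dotZl xg mulr0 subr0.
rewrite px0 dot0l eq_sym mulf_eq0 => /orP[/eqP xm0|/eqP //].
move: px0; rewrite /central_proj xm0 scale0r sub0r => /eqP.
by rewrite oppr_eq0 scaler_eq0 (negbTE x0) orbF => /eqP.
Qed.

Lemma collinear_central_proj C m g x y : x != 0 -> y != 0 ->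
  on x g -> ~ on C g -> ~ on C m -> on y m -> collinear x y C ->
  same_pt y (central_proj C m x).
Proof.
move=> x0 y0 xg Cg Cm ym [l [l0 [xl [yl Cl]]]].
apply: (same_pt_meet (cross_neq0 l0 Cl Cm)) => //.
- exact: central_proj_neq0 x0 xg Cg Cm.
- by rewrite /on dotBl !dotZl xl Cl !mulr0 subrr.
- exact: central_proj_on.
Qed.

Lemma central_proj_comp C C' g m x : on x g ->
  central_proj C' g (central_proj C m x) =
  (dot C' g * dot C m) *: x + dot x m *: central_proj C' g C.
Proof.
move=> xg; rewrite {1}/central_proj dotBl !dotZl xg mulr0 subr0 /central_proj.
by apply: row3P; rewrite !mxE; ring.
Qed.

(* [(r ^+ n - k ^+ n) / (r - k)], by a recursion that also makes sense for [r = k]. *)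
Fixpoint divdiff_pow r k n : R :=
  if n is n'.+1 then r * divdiff_pow r k n' + k ^+ n' else 0.

Lemma divdiff_powE r k n : divdiff_pow r k n * (r - k) = r ^+ n - k ^+ n.
Proof.
elim: n => [|n IH] /=; first by rewrite mul0r expr0 subrr.
by rewrite mulrDl -mulrA IH !exprS; ring.
Qed.

Lemma divdiff_pow_diag k n : divdiff_pow k k n = n%:R * k ^+ n.-1.
Proof.
elim: n => [|n IH] /=; first by rewrite mul0r.
rewrite IH; case: n {IH} => [|n] /=; first by rewrite mul0r mulr0 add0r mul1r.
by rewrite exprS; ring.
Qed.

Lemma divdiff_pow_opp k n : divdiff_pow (- k) k n = if odd n then k ^+ n.-1 else 0.
Proof.
elim: n => [|n IH] //=; rewrite IH; case: n {IH} => [|n] /=.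
  by rewrite mulr0 add0r.
by case: (odd n) => /=; rewrite ?mulr0 ?add0r // exprS; ring.
Qed.

Lemma divdiff_pow_eq0 r k n : k != 0 -> (0 < n)%N -> divdiff_pow r k n = 0 ->
  r = - k /\ ~~ odd n.
Proof.
move=> k0 n0; have [-> | rk] := eqVneq r k => d0.
  move: d0; rewrite divdiff_pow_diag => /eqP.
  rewrite mulf_eq0 expf_eq0 (negbTE k0) andbF orbF pnatr_eq0 => /eqP n_0.
  by rewrite n_0 in n0.
have rXk : r ^+ n = k ^+ n by apply/eqP; rewrite -subr_eq0 -divdiff_powE d0 mul0r.
have rk_norm : `|r| = `|k|.
  by apply/eqP; rewrite -(eqrXn2 n0) ?normr_ge0 // -!normrX rXk.
have /eqP : r ^+ 2 = k ^+ 2.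
  by rewrite -(real_normK (num_real r)) -(real_normK (num_real k)) rk_norm.
rewrite eqf_sqr (negbTE rk) /= => /eqP rE; split=> //.
move: d0; rewrite rE divdiff_pow_opp; case: (odd n) => // /eqP.
by rewrite expf_eq0 (negbTE k0) andbF.
Qed.

(* The line C C' meets g and g' in C + lam *: C' and C + mu *: C', where
   lam = - (C.g) / (C'.g) and mu = - (C.g') / (C'.g'); thus lam / mu = -1 iff
   [harmonic_defect g g' C C' = 0]. *)
Definition harmonic_defect g g' C C' : R :=
  dot C g * dot C' g' + dot C' g * dot C g'.

Lemma harmonic_defect_swap_lines g g' C C' :
  harmonic_defect g' g C C' = harmonic_defect g g' C C'.
Proof. by rewrite /harmonic_defect; ring. Qed.

Lemma harmonic_defect_swap_points g g' C C' :
  harmonic_defect g g' C' C = harmonic_defect g g' C C'.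
Proof. by rewrite /harmonic_defect; ring. Qed.

Record zigzag g g' C C' (B : nat -> 'rV[R]_3) : Prop := Zigzag {
  zigzag_polygonal : polygonal_line B;
  zigzag_on : forall j, on (B j) (if odd j then g' else g);
  zigzag_collinear : forall j, collinear (B j) (B j.+1) (if odd j then C' else C);
  zigzag_Cg : ~ on C g;
  zigzag_Cg' : ~ on C g';
  zigzag_C'g : ~ on C' g;
  zigzag_C'g' : ~ on C' g' }.

Lemma zigzag_shift g g' C C' B :
  zigzag g g' C C' B -> zigzag g' g C' C (fun j => B j.+1).
Proof.
case=> polyB onB colB Cg Cg' C'g C'g'; split=> [j|j|j|//|//|//|//].
- exact: polyB j.+1.
- by have := onB j.+1 => /=; case: (odd j).
- by have := colB j.+1 => /=; case: (odd j).
Qed.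

Section Zigzag.
Variables (g g' C C' : 'rV[R]_3) (B : nat -> 'rV[R]_3).
Hypothesis zB : zigzag g g' C C' B.

Local Notation E := (central_proj C' g C).
Local Notation kappa := (dot C' g * dot C g').
Local Notation rho := (dot C g * dot C' g').

Let Cg : ~ on C g := zigzag_Cg zB.
Let Cg' : ~ on C g' := zigzag_Cg' zB.
Let C'g : ~ on C' g := zigzag_C'g zB.
Let C'g' : ~ on C' g' := zigzag_C'g' zB.

Let B_neq0 j : B j != 0. Proof. by have [] := zigzag_polygonal zB j. Qed.

Let B0g : on (B 0) g. Proof. exact: zigzag_on zB 0. Qed.

Lemma zigzag_step j : same_pt (B j.+1)
  (if odd j then central_proj C' g (B j) else central_proj C g' (B j)).
Proof.
have := zigzag_on zB j.+1; have := zigzag_collinear zB j; have := zigzag_on zB j.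
have [Bj0 Bj1] := (B_neq0 j, B_neq0 j.+1).
rewrite /=; case: (odd j) => /= onj colj onj1.
- exact: collinear_central_proj Bj0 Bj1 onj C'g' C'g onj1 colj.
- exact: collinear_central_proj Bj0 Bj1 onj Cg Cg' onj1 colj.
Qed.

Lemma zigzag_two_steps j : ~~ odd j ->
  same_pt (B j.+2) (central_proj C' g (central_proj C g' (B j))).
Proof.
move=> ej; have := zigzag_step j.+1; have := zigzag_step j; rewrite /= (negbTE ej) /=.
by move=> s1 s2; apply: same_pt_trans s2 (same_pt_central_proj _ _ s1).
Qed.

Lemma zigzag_iter n : same_pt (B n.*2)
  (kappa ^+ n *: B 0 + (divdiff_pow rho kappa n * dot (B 0) g') *: E).
Proof.
elim: n => [|n IH].
  by rewrite expr0 scale1r mul0r scale0r addr0; apply: same_pt_refl.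
rewrite doubleS; apply: same_pt_trans (zigzag_two_steps (negbT (odd_double n))) _.
apply: same_pt_trans (same_pt_central_proj _ _ (same_pt_central_proj _ _ IH)) _.
have Eg : on E g := central_proj_on C' g C.
have Eg' : dot E g' = rho - kappa by rewrite /central_proj dotBl !dotZl.
rewrite central_proj_comp; last by rewrite /on dotDl !dotZl B0g Eg !mulr0 addr0.
rewrite dotDl !dotZl Eg' /=.
exists 1; rewrite oner_neq0 scale1r exprS; split=> //.
by apply: row3P; rewrite !mxE; ring.
Qed.

Let kappa_neq0 : kappa != 0.
Proof. by rewrite mulf_neq0 //; apply/eqP. Qed.

Lemma zigzag_start_off_g' : ~ on (B 0) g'.
Proof.
move=> B0g'; have [_ [B01 _]] := zigzag_polygonal zB 0; apply/B01/same_pt_sym.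
have := zigzag_step 0; rewrite /= /central_proj B0g' scale0r sub0r -scaleNr.
by move/same_pt_trans; apply; apply: same_ptZ; rewrite oppr_eq0; apply/eqP.
Qed.

Lemma zigzag_not_period2 : ~ same_pt (B 2) (B 0).
Proof.
move=> [k [_ B2E]]; have [_ [_ not_col]] := zigzag_polygonal zB 0.
have [l [l0 [B0l [B1l _]]]] := zigzag_collinear zB 0.
by apply: not_col; exists l; do !split=> //; rewrite /on B2E dotZl B0l mulr0.
Qed.

Lemma zigzag_start_not_fixed : ~ exists s, E = s *: B 0.
Proof.
move=> [s Es]; apply: zigzag_not_period2.
have [t [_ e]] := zigzag_two_steps (isT : ~~ odd 0).
rewrite central_proj_comp // Es scalerA -scalerDl scalerA in e.
exact: same_pt_scale (B_neq0 2) e.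
Qed.

Lemma zigzag_even_period n : (0 < n)%N -> same_pt (B n.*2) (B 0) ->
  harmonic_defect g g' C C' = 0 /\ ~~ odd n.
Proof.
move=> n0 [la [_ Bla]]; have [t [t0 e]] := zigzag_iter n.
set d := divdiff_pow rho kappa n in e; set s := dot (B 0) g' in e.
suff d0 : d = 0.
  have [rhoE ->] := divdiff_pow_eq0 kappa_neq0 n0 d0.
  by rewrite /harmonic_defect rhoE; split=> //; ring.
have [//|d0] := eqVneq d 0; exfalso; apply: zigzag_start_not_fixed.
have s0 : s != 0 by apply/eqP/zigzag_start_off_g'.
have dsE : (d * s) *: E = (t^-1 * la - kappa ^+ n) *: B 0.
  rewrite scalerBl -[(t^-1 * la) *: _]scalerA -Bla e scalerA mulVf // scale1r.
  by rewrite addrC addKr.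
exists ((d * s)^-1 * (t^-1 * la - kappa ^+ n)).
by rewrite -scalerA -dsE scalerA mulVf ?mulf_neq0 // scale1r.
Qed.

Lemma zigzag_period4 : harmonic_defect g g' C C' = 0 -> same_pt (B 4) (B 0).
Proof.
move=> hd0; have [t [_ e]] := zigzag_iter 2.
have d0 : divdiff_pow rho kappa 2 = 0.
  by rewrite /= mulr0 add0r expr0 mulr1 expr1 -hd0.
move: e; rewrite d0 mul0r scale0r addr0 scalerA => e.
exact: same_pt_scale (B_neq0 4) e.
Qed.

Lemma zigzag_odd_not_period n : odd n -> ~ same_pt (B n) (B 0).
Proof.
move=> odd_n Bn; apply/zigzag_start_off_g'/(same_pt_on Bn).
by have := zigzag_on zB n; rewrite odd_n.
Qed.

End Zigzag.

Lemma zigzag_period4_shift g g' C C' B : zigzag g g' C C' B ->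
  harmonic_defect g g' C C' = 0 -> forall i, same_pt (B (i + 4)%N) (B i).
Proof.
move=> zB hd0 i; elim: i g g' C C' B zB hd0 => [|i IH] g g' C C' B zB hd0.
  by rewrite add0n; exact: zigzag_period4 zB hd0.
rewrite addSn; apply: (IH _ _ _ _ _ (zigzag_shift zB)).
by rewrite harmonic_defect_swap_lines harmonic_defect_swap_points.
Qed.

Lemma zigzag_periodic g g' C C' B n : zigzag g g' C C' B ->
  periodic_with_period B n <-> n = 4%N /\ harmonic_defect g g' C C' = 0.
Proof.
move=> zB; split.
  move=> [n0 [per minper]]; have Bn := per 0%N; rewrite add0n in Bn.
  have even_n : ~~ odd n by apply/negP => /(zigzag_odd_not_period zB); apply.
  have n2E := even_halfK even_n.
  have [hd0 even_half] : harmonic_defect g g' C C' = 0 /\ ~~ odd n./2.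
    by apply: (zigzag_even_period zB); rewrite ?n2E // -double_gt0 n2E.
  have le_n4 : (n <= 4)%N.
    rewrite leqNgt; apply/negP => lt4n.
    by apply: (minper 4%N) => //; exact: zigzag_period4_shift zB hd0.
  split=> //; move: n0 le_n4 even_n even_half.
  by case: n {per minper Bn n2E} => [|[|[|[|[|]]]]].
move=> [-> hd0]; split=> //; split; first exact: zigzag_period4_shift zB hd0.
move=> m /andP[m0 m4] per_m; have := per_m 0%N; rewrite add0n.
case: m m0 m4 {per_m} => [|[|[|[|]]]] //= _ _.
- by have [_ [B01 _]] := zigzag_polygonal zB 0 => /same_pt_sym.
- exact: zigzag_not_period2 zB.
- by move/(zigzag_odd_not_period zB); apply.
Qed.

Lemma harmonic_defect_eq0 g1 g2 C1 C2 :
  C1 != 0 -> C2 != 0 -> ~ same_pt C1 C2 -> ~ on C1 g2 -> ~ on C2 g1 -> ~ on C2 g2 ->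
  (exists D1 D2, D1 != 0 /\ D2 != 0 /\ on D1 g1 /\ on D2 g2 /\
     collinear C1 C2 D1 /\ collinear C1 C2 D2 /\ harmonic C1 C2 D1 D2) <->
  harmonic_defect g1 g2 C1 C2 = 0.
Proof.
move=> C1_0 C2_0 C12 /eqP C1g2 /eqP C2g1 /eqP C2g2; split.
  move=> [D1 [D2 [_ [_ [D1g1 [D2g2 [_ [_ [lam [mu [_ [D1E [D2E lm]]]]]]]]]]]]].
  move: (same_pt_on D1E D1g1) (same_pt_on D2E D2g2).
  rewrite /harmonic_defect /on !dotDl !dotZl => /eqP; rewrite addr_eq0 => /eqP-> /eqP.
  by rewrite addr_eq0 => /eqP->; rewrite lm; ring.
move=> hd0.
pose lam := - (dot C1 g1 / dot C2 g1); pose mu := - (dot C1 g2 / dot C2 g2).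
have line_neq0 := cross_neq0_not_same C1_0 C2_0 C12.
have D_neq0 k : C1 + k *: C2 != 0.
  apply: contra_not_neq C12 => /eqP; rewrite addr_eq0 -scaleNr => /eqP C1E.
  exact: same_pt_scale C1_0 C1E.
have D_col k : collinear C1 C2 (C1 + k *: C2).
  exists (cross C1 C2); do !split=> //; first exact: dot_crossl.
  - exact: dot_crossr.
  - by rewrite /on dotDl dotZl dot_crossl dot_crossr mulr0 addr0.
exists (C1 + lam *: C2), (C1 + mu *: C2); do !split=> //.
- by rewrite /on dotDl dotZl /lam mulNr divfK // subrr.
- by rewrite /on dotDl dotZl /mu mulNr divfK // subrr.
exists lam, mu; do !split; try exact: same_pt_refl.
  by rewrite oppr_eq0 mulf_neq0 ?invr_eq0.
have C1g1E : dot C1 g1 = - (dot C2 g1 * dot C1 g2) / dot C2 g2.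
  by apply: (mulIf C2g2); rewrite divfK //; apply/eqP; rewrite -addr_eq0; apply/eqP.
by rewrite /lam /mu C1g1E; field; rewrite C2g1 C2g2.
Qed.

End ProjectivePlane.

Theorem theorem3p15 (R : realFieldType) (g1 g2 C1 C2 : 'rV[R]_3) :
  g1 != 0 -> g2 != 0 -> ~ same_pt g1 g2 ->
  C1 != 0 -> C2 != 0 -> ~ same_pt C1 C2 ->
  ~ on C1 g1 -> ~ on C1 g2 -> ~ on C2 g1 -> ~ on C2 g2 ->
  forall A : nat -> 'rV[R]_3,
    polygonal_line A -> inscribed_circumscribed g1 g2 C1 C2 A ->
    forall n : nat,
      periodic_with_period A n <->
      (n = 4%N /\
       exists D1 D2 : 'rV[R]_3,
         D1 != 0 /\ D2 != 0 /\ on D1 g1 /\ on D2 g2 /\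
         collinear C1 C2 D1 /\ collinear C1 C2 D2 /\ harmonic C1 C2 D1 D2).
Proof.
move=> _ _ _ C1_0 C2_0 C12 C1g1 C1g2 C2g1 C2g2 A polyA [b [c icA]] n.
have zA : zigzag (if b then g2 else g1) (if b then g1 else g2)
                 (if c then C2 else C1) (if c then C1 else C2) A.
  case: b c icA => [] [] icA; (split; [done | move=> j | move=> j | done..]);
    by have := icA j; rewrite ?addn0 ?addn1 /=; case: (odd j) => -[].
rewrite (zigzag_periodic n zA) {zA}.
have -> : harmonic_defect (if b then g2 else g1) (if b then g1 else g2)
            (if c then C2 else C1) (if c then C1 else C2) = harmonic_defect g1 g2 C1 C2.
  by case: b c {icA} => [] []; rewrite ?(harmonic_defect_swap_lines g1)
    ?(harmonic_defect_swap_points _ _ C1).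
have hdP := harmonic_defect_eq0 C1_0 C2_0 C12 C1g2 C2g1 C2g2.
by split=> -[-> ?]; split=> //; apply/hdP.
Qed.
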